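(* Let $(X,\mathcal{S})$ be a finite set system with $|X|=n=2^k$ for an integer $k\ge1$, and let the packings $\mathcal{F}_j$, the chains $F_j(S)$, the classes $\mathcal{S}_i$ and the families $\mathcal{F}_j^i$ be as defined in the context. Then there is an absolute constant $c>0$ such that for every $1\le i\le k$, every $j$ with $i-1\le j\le k$, and every $F\in\mathcal{F}_j^i$, $$|F|\le c\,\frac{n}{2^{i-1}} .$$
   Context: $\triangle$ denotes symmetric difference. Construction: set $\mathcal{F}_0=\{\emptyset\}$, and for $j=1,\dots,k$ let $\mathcal{F}_j\subseteq\mathcal{S}$ be a family that is maximal under inclusion subject to $|F\triangle F'|>n/2^j$ for all distinct $F,F'\in\mathcal{F}_j$. For $S\in\mathcal{S}$ define the nearest-neighbor chain $F_k(S):=S$ and, for $j=k,k-1,\dots,1$, let $F_{j-1}(S)$ be an element of $\mathcal{F}_{j-1}$ minimizing $|F_j(S)\triangle F|$ over $F\in\mathcal{F}_{j-1}$. For $i=1,\dots,k$ let $\mathcal{S}_i=\{S\in\mathcal{S}: n/2^i\le|S|<n/2^{i-1}\}$, and for $j=i-1,\dots,k$ let $\mathcal{F}_j^i=\{F_j(S):S\in\mathcal{S}_i\}$. *)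

From mathcomp Require Import all_boot all_order all_algebra.
Set Implicit Arguments. Unset Strict Implicit. Unset Printing Implicit Defensive.
Import Order.TTheory GRing.Theory Num.Theory.
Local Open Scope ring_scope.

Section Defs.
Variable T : finType.

Definition symdiff (A B : {set T}) : {set T} := (A :\: B) :|: (B :\: A).

Definition nX : nat := #|T|.

Definition separated (j : nat) (G : {set {set T}}) : bool :=
  [forall F in G, forall F' in G,
     (F != F') ==> ((nX%:R / (2%:R ^+ j) : rat) < (#|symdiff F F'|)%:R)].

Definition packings (k : nat) (S : {set {set T}}) (Fam : nat -> {set {set T}}) : Prop :=
  Fam 0%N = [set set0] /\
  (forall j, (1 <= j <= k)%N ->
     maxset (fun G : {set {set T}} => (G \subset S) && separated j G) (Fam j)).

Definition chains (k : nat) (S : {set {set T}}) (Fam : nat -> {set {set T}})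
  (chain : nat -> {set T} -> {set T}) : Prop :=
  forall S0, S0 \in S ->
    chain k S0 = S0 /\
    (forall j, (1 <= j <= k)%N ->
       chain j.-1 S0 \in Fam j.-1 /\
       (forall F, F \in Fam j.-1 ->
          (#|symdiff (chain j S0) (chain j.-1 S0)| <= #|symdiff (chain j S0) F|)%N)).

Definition Sclass (S : {set {set T}}) (i : nat) : {set {set T}} :=
  [set S0 in S | ((nX%:R / (2%:R ^+ i) : rat) <= (#|S0|)%:R)
               && ((#|S0|)%:R < (nX%:R / (2%:R ^+ i.-1) : rat))].

Definition Fji (S : {set {set T}}) (chain : nat -> {set T} -> {set T}) (j i : nat)
  : {set {set T}} := [set chain j S0 | S0 in Sclass S i].

End Defs.

(* A maximal (n/2^m)-separated subfamily of the system is an (n/2^m)-net of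
   it: a member farther than n/2^m from all of it could be added.  Hence
   consecutive links of a nearest-neighbour chain satisfy
   |F_m(S) △ F_(m-1)(S)| <= n/2^(m-1), and since |A| <= |B| + |A △ B|,
   walking the chain down from F_k(S) = S to level j changes the size by at
   most the geometric sum n/2^(k-1) + ... + n/2^j < 2n/2^j.  For S in the
   class S_i and j >= i-1 this gives |F_j(S)| < n/2^(i-1) + 2n/2^(i-1), so
   c = 3 works. *)

From mathcomp Require Import all_boot all_order all_algebra lra.
Set Implicit Arguments. Unset Strict Implicit.
Import Order.TTheory GRing.Theory Num.Theory.
Local Open Scope ring_scope.

Lemma ler_wdiv_exp2 (R : numFieldType) (x : R) (a b : nat) : 0 <= x -> (a <= b)%N ->
  x / 2%:R ^+ b <= x / 2%:R ^+ a.
Proof.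
move=> x_ge0 le_ab; rewrite ler_wpM2l // lef_pV2 ?posrE ?exprn_gt0 //.
by rewrite ler_eXn2l // ltr1n.
Qed.

Section Symdiff.
Variable T : finType.
Implicit Types A B : {set T}.

Lemma symdiffC A B : symdiff A B = symdiff B A.
Proof. by rewrite /symdiff setUC. Qed.

Lemma symdiffxx A : symdiff A A = set0.
Proof. by rewrite /symdiff setDv setU0. Qed.

Lemma leq_card_symdiff A B : (#|A| <= #|B| + #|symdiff B A|)%N.
Proof.
apply: leq_trans (leq_card_setU _ _); apply: subset_leq_card.
by apply/subsetP => x xA; rewrite /symdiff !inE xA; case: (x \in B).
Qed.

End Symdiff.

Section Net.
Variable T : finType.

Lemma separatedP j (G : {set {set T}}) :
  reflect (forall F F', F \in G -> F' \in G -> F != F' ->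
             (nX T)%:R / 2%:R ^+ j < (#|symdiff F F'|)%:R :> rat)
          (separated j G).
Proof.
apply: (iffP forall_inP) => [sepG F F' FG F'G | sepG F FG].
  by move: (sepG F FG) => /forall_inP/(_ F' F'G)/implyP.
by apply/forall_inP => F' F'G; apply/implyP; apply: sepG.
Qed.

Lemma maxset_separated_net j (S G : {set {set T}}) X :
  maxset (fun H : {set {set T}} => (H \subset S) && separated j H) G -> X \in S ->
  exists2 F, F \in G & (#|symdiff X F|)%:R <= (nX T)%:R / 2%:R ^+ j :> rat.
Proof.
move=> /maxsetP[/andP[sGS sepG] maxG] XS.
have [/exists_inP[F FG closeF] | /exists_inP farG] :=
  boolP [exists F in G, (#|symdiff X F|)%:R <= (nX T)%:R / 2%:R ^+ j :> rat].
  by exists F.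
have far F : F \in G -> (nX T)%:R / 2%:R ^+ j < (#|symdiff X F|)%:R :> rat.
  by move=> FG; rewrite ltNge; apply/negP => closeF; apply: farG; exists F.
have sepXG : separated j (X |: G).
  apply/separatedP => F F'; rewrite !in_setU1.
  case/predU1P => [-> | FG]; case/predU1P => [-> | F'G]; rewrite ?eqxx //.
  - by move=> _; apply: far.
  - by move=> _; rewrite symdiffC; apply: far.
  - by apply: (separatedP _ _ sepG).
have XG : X \in G.
  by rewrite -(maxG (X |: G)) ?setU11 ?subsetUr // subUset sub1set XS sGS.
by exists X; rewrite // symdiffxx cards0 divr_ge0 ?exprn_ge0.
Qed.

End Net.

Section Chains.
Variables (T : finType) (k : nat) (S : {set {set T}}).
Variables (Fam : nat -> {set {set T}}) (chain : nat -> {set T} -> {set T}).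
Hypothesis packFam : packings k S Fam.
Hypothesis chainsFam : chains k S Fam chain.
Variable S0 : {set T}.
Hypothesis S0S : S0 \in S.

Lemma chain_in_system m : (1 <= m <= k)%N -> chain m S0 \in S.
Proof.
have [chain_top chain_step] := chainsFam S0S.
case/andP=> m_gt0; rewrite leq_eqVlt => /predU1P[-> | lt_mk]; first by rewrite chain_top.
have [chain_in _] := chain_step m.+1 lt_mk.
have mk : (1 <= m <= k)%N by rewrite m_gt0 ltnW.
have /maxsetP[/andP[sFS _] _] := proj2 packFam m mk.
exact: subsetP sFS _ chain_in.
Qed.

Lemma card_symdiff_chain_step m : (1 <= m <= k)%N ->
  (#|symdiff (chain m S0) (chain m.-1 S0)|)%:R <= (nX T)%:R / 2%:R ^+ m.-1 :> rat.
Proof.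
move=> mk; have [_ /(_ m mk) [_ nearest]] := chainsFam S0S.
case: m mk nearest => [//|[|m]] mk nearest.
  rewrite expr0 divr1 ler_nat; apply: leq_trans (max_card _).
  exact: subset_leq_card (subsetT _).
have mk' : (1 <= m.+1 <= k)%N by case/andP: mk => _ /ltnW ->.
have [F FG closeF] := maxset_separated_net (proj2 packFam _ mk') (chain_in_system mk).
by apply: le_trans closeF; rewrite ler_nat; apply: nearest.
Qed.

Lemma card_chain_le j : (j <= k)%N ->
  (#|chain j S0|)%:R <= (#|S0|)%:R + 2%:R * ((nX T)%:R / 2%:R ^+ j) :> rat.
Proof.
suff bound_down t : (t <= k)%N -> (#|chain (k - t) S0|)%:R <=
    (#|S0|)%:R + 2%:R * ((nX T)%:R / 2%:R ^+ (k - t)) :> rat.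
  by move=> jk; have := bound_down _ (leq_subr j k); rewrite subKn.
elim: t => [|t IHt] tk.
  by rewrite subn0 (proj1 (chainsFam S0S)) lerDl mulr_ge0 ?divr_ge0 ?exprn_ge0.
have mk : (1 <= k - t <= k)%N by rewrite leq_subr subn_gt0 andbT.
have := card_symdiff_chain_step mk; rewrite -subnS => step.
have halve : (nX T)%:R / 2%:R ^+ (k - t) = (nX T)%:R / 2%:R ^+ (k - t.+1) / 2%:R :> rat.
  by rewrite -mulrA -invfM -exprSr subnSK.
have IH := IHt (ltnW tk); rewrite halve in IH.
have := leq_card_symdiff (chain (k - t.+1) S0) (chain (k - t) S0).
rewrite -(ler_nat rat) natrD => triangle.
lra.
Qed.

End Chains.

Theorem mainTheorem6 :
  exists c : rat, 0 < c /\
  forall (k : nat) (T : finType) (S : {set {set T}})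
         (Fam : nat -> {set {set T}}) (chain : nat -> {set T} -> {set T}),
    (1 <= k)%N ->
    #|T| = (2 ^ k)%N ->
    packings k S Fam ->
    chains k S Fam chain ->
    forall i j : nat, (1 <= i <= k)%N -> (i.-1 <= j <= k)%N ->
    forall F, F \in Fji S chain j i ->
      ((#|F|)%:R : rat) <= c * ((#|T|)%:R / (2%:R ^+ i.-1)).
Proof.
exists 3%:R; split => // k T S Fam chain _ _ packFam chainsFam i j _.
case/andP=> le_ij le_jk _ /imsetP[S0 + ->]; rewrite inE => /and3P[S0S _ small].
have := card_chain_le packFam chainsFam S0S le_jk.
have := ler_wdiv_exp2 (ler0n rat (nX T)) le_ij.
rewrite /nX in small * => shrink chain_bound.
lra.
Qed.
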